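(* (i) If $\theta\in\mathbb{K}_2$ and $\theta\cdot\zeta_l\neq0$ for some $l\in\Gamma_i^{r_1}$, then $\alpha_\theta>\alpha_i$, where $\alpha_\theta=\max_{j:\theta_j>0}\alpha_j$. (ii) For every $\theta\in\mathbb{K}_2$ with $\Gamma_\theta^+\cup\Gamma_\theta^-\ne\emptyset$, $\gamma_\theta:=\alpha_\theta-\max_{k\in\Gamma_\theta^+\cup\Gamma_\theta^-}\rho_k>r_1$. Consequently $r_2:=\min\{\gamma_\theta:\theta\in\mathbb{K}_2,\ \Gamma_\theta^+\cup\Gamma_\theta^-\neq\emptyset\}$ (when this set is nonempty) satisfies $r_2>r_1$.
   Context: Fix integers $s_0,r_0\ge1$, vectors $\nu_k,\nu'_k\in\mathbb{N}^{s_0}$ ($k=1,\dots,r_0$), $\zeta_k=\nu'_k-\nu_k$, $\alpha\in[0,\infty)^{s_0}$, $\beta\in\mathbb{R}^{r_0}$, $\rho_k=\beta_k+\nu_k\cdot\alpha$. For $\theta\in[0,\infty)^{s_0}$, $\Gamma_\theta^+=\{k:\theta\cdot\zeta_k>0\}$, $\Gamma_\theta^-=\{k:\theta\cdot\zeta_k<0\}$. Let $r_1=\min_i(\alpha_i-\max_{k:\zeta_{ik}\ne0}\rho_k)$ (assumed finite; a maximum over the empty set is $-\infty$) and $\Gamma_i^{r_1}=\{k:r_1+\rho_k=\alpha_i\}$. Let $S_1=\{i:\Gamma_i^{r_1}\ne\emptyset\}$, $\Pi_1$ the coordinate projection onto $\mathrm{span}\{e_i:i\in S_1\}$ ($(\Pi_1x)_i=x_i$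 for $i\in S_1$, $0$ otherwise), and $\mathbb{K}_2=\{\theta\in[0,\infty)^{s_0}:\theta\cdot\Pi_1\zeta_k=0\ \forall k\in\bigcup_i\Gamma_i^{r_1}\}$. *)

From HB Require Import structures.
From mathcomp Require Import all_boot all_order all_algebra.
Set Implicit Arguments. Unset Strict Implicit. Unset Printing Implicit Defensive.
Import Order.TTheory GRing.Theory Num.Theory.
Local Open Scope ring_scope.

Section Defs.
Variable R : realFieldType.

(* max / min over a finite (possibly empty) index set; None encodes the
   value of an empty max (-oo) resp. empty min (+oo). *)
Definition omax (x y : option R) : option R :=
  match x, y with
  | None, _ => y
  | _, None => x
  | Some a, Some b => Some (Num.max a b)
  end.
Definition omin (x y : option R) : option R :=
  match x, y with
  | None, _ => y
  | _, None => x
  | Some a, Some b => Some (Num.min a b)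
  end.
Definition maxo (I : finType) (P : pred I) (F : I -> R) : option R :=
  \big[omax/None]_(k | P k) Some (F k).
Definition mino (I : finType) (P : pred I) (F : I -> R) : option R :=
  \big[omin/None]_(k | P k) Some (F k).

Variables (s0 r0 : nat).
Variables (nu nu' : 'I_r0 -> 'I_s0 -> nat).
Variables (alpha : 'I_s0 -> R) (beta : 'I_r0 -> R).

Definition zeta (k : 'I_r0) (i : 'I_s0) : int := (nu' k i)%:Z - (nu k i)%:Z.

Definition dotz (theta : 'I_s0 -> R) (x : 'I_s0 -> int) : R :=
  \sum_(i < s0) theta i * (x i)%:~R.

Definition rho (k : 'I_r0) : R := beta k + \sum_(i < s0) (nu k i)%:R * alpha i.

Definition Gamma_plus (theta : 'I_s0 -> R) : pred 'I_r0 :=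
  fun k => 0 < dotz theta (zeta k).
Definition Gamma_minus (theta : 'I_s0 -> R) : pred 'I_r0 :=
  fun k => dotz theta (zeta k) < 0.

(* r1 = min_i (alpha_i - max_{k : zeta_ik <> 0} rho_k); a term with an empty
   max is +oo (None) and does not contribute; r1opt = None iff r1 = +oo. *)
Definition r1opt : option R :=
  mino [pred i | maxo (fun k => zeta k i != 0) rho != None]
       (fun i => alpha i - odflt 0 (maxo (fun k => zeta k i != 0) rho)).

Variable r1 : R.

Definition Gamma_r1 (i : 'I_s0) : pred 'I_r0 := fun k => r1 + rho k == alpha i.

Definition S1 : pred 'I_s0 := fun i => [exists k, Gamma_r1 i k].

Definition Pi1 (x : 'I_s0 -> int) : 'I_s0 -> int := fun i => if S1 i then x i else 0.

Definition K2 (theta : 'I_s0 -> R) : Prop :=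
  (forall i, 0 <= theta i) /\
  (forall k, (exists i, Gamma_r1 i k) -> dotz theta (Pi1 (zeta k)) = 0).

Definition alpha_theta (theta : 'I_s0 -> R) : option R :=
  maxo (fun j => 0 < theta j) alpha.

Definition gamma_theta (theta : 'I_s0 -> R) : option R :=
  match alpha_theta theta,
        maxo (fun k => Gamma_plus theta k || Gamma_minus theta k) rho with
  | Some a, Some m => Some (a - m)
  | _, _ => None
  end.

End Defs.

From HB Require Import structures.
From mathcomp Require Import all_boot all_order all_algebra.
From Stdlib Require Import ClassicalEpsilon.
Set Implicit Arguments. Unset Strict Implicit. Unset Printing Implicit Defensive.
Import Order.TTheory GRing.Theory Num.Theory.
Local Open Scope ring_scope.

(* Every k with theta . zeta_k <> 0 has some coordinate j with theta_j > 0,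
   zeta_{jk} <> 0 and k outside Gamma_j^{r1}: if k lies in some Gamma_i^{r1},
   the K_2 condition kills the S_1-part of theta . zeta_k, so j can be taken
   outside S_1.  Since zeta_{jk} <> 0 forces r1 + rho_k <= alpha_j by the
   definition of r1, and k is not in Gamma_j^{r1}, the inequality is strict;
   hence alpha_theta >= alpha_j > r1 + rho_k.  Applied to the k realising the
   max in gamma_theta this gives (ii), and r2 > r1 follows because gamma_theta
   only takes the finitely many values alpha_j - rho_k, so the minimum
   defining r2 is attained. *)

Section FiniteExtrema.
Variables (R : realFieldType) (I : finType).
Implicit Types (P : pred I) (F : I -> R).

Lemma maxo_ub P F k : P k -> exists m, maxo P F = Some m /\ F k <= m.
Proof.
rewrite /maxo => Pk.
have : k \in index_enum I by rewrite /index_enum -enumT mem_enum.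
elim: (index_enum I) => [|a r IHr] //; rewrite inE big_cons => /orP[/eqP <-|kr].
  rewrite Pk; case: (\big[_/_]_(i <- r | _) _) => [b|] /=; eexists; split=> //.
  by rewrite le_max lexx.
case: (P a); last exact: IHr.
have [b [-> Fkb]] := IHr kr; eexists; split; first by [].
by rewrite le_max Fkb orbT.
Qed.

Lemma mino_lb P F k : P k -> exists m, mino P F = Some m /\ m <= F k.
Proof.
rewrite /mino => Pk.
have : k \in index_enum I by rewrite /index_enum -enumT mem_enum.
elim: (index_enum I) => [|a r IHr] //; rewrite inE big_cons => /orP[/eqP <-|kr].
  rewrite Pk; case: (\big[_/_]_(i <- r | _) _) => [b|] /=; eexists; split=> //.
  by rewrite ge_min lexx.
case: (P a); last exact: IHr.
have [b [-> bFk]] := IHr kr; eexists; split; first by [].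
by rewrite ge_min bFk orbT.
Qed.

Lemma maxo_attained P F m : maxo P F = Some m -> exists k, P k /\ F k = m.
Proof.
rewrite /maxo; move: m.
apply: (big_ind (fun o => forall m, o = Some m -> exists k, P k /\ F k = m)) => //.
  move=> [a|] [b|] //= Ha Hb m [<-].
  by rewrite /Num.max; case: ifP => _; [exact: Hb | exact: Ha].
by move=> i Pi m [<-]; exists i.
Qed.

Lemma ex_minimizer (Q : I -> Prop) F :
  (exists x, Q x) -> exists x, Q x /\ forall y, Q y -> F x <= F y.
Proof.
case=> x0 Qx0.
pose q y : bool := if excluded_middle_informative (Q y) then true else false.
have qP y : reflect (Q y) (q y).
  by rewrite /q; case: excluded_middle_informative => Qy; constructor.
have qx0 : q x0 by apply/qP.
case: (arg_minP F qx0) => x /qP Qx Fmin.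
by exists x; split=> // y /qP /Fmin.
Qed.
End FiniteExtrema.

Lemma dotzB (R : realFieldType) (n : nat) (theta : 'I_n -> R) (x y : 'I_n -> int) :
  dotz theta (fun i => x i - y i) = dotz theta x - dotz theta y.
Proof. by rewrite /dotz -sumrB; apply: eq_bigr => i _; rewrite intrB mulrBr. Qed.

Lemma dotz_neq0 (R : realFieldType) (n : nat) (theta : 'I_n -> R) (x : 'I_n -> int) :
  dotz theta x != 0 -> exists j, theta j != 0 /\ x j != 0.
Proof.
case: (boolP [exists j, (theta j != 0) && (x j != 0)]) => [/existsP[j /andP[]]|].
  by exists j.
rewrite negb_exists => /forallP nosupp; rewrite /dotz big1 ?eqxx // => j _.
by apply/eqP; move: (nosupp j); rewrite mulf_eq0 intr_eq0 negb_and !negbK.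
Qed.

Section Lemma4p4.
Variables (R : realFieldType) (s0 r0 : nat).
Variables (nu nu' : 'I_r0 -> 'I_s0 -> nat) (alpha : 'I_s0 -> R) (beta : 'I_r0 -> R).
Variable r1 : R.
Hypothesis r1E : r1opt nu nu' alpha beta = Some r1.
Implicit Types (theta : 'I_s0 -> R) (i j : 'I_s0) (k : 'I_r0).

Local Notation zeta := (zeta nu nu').
Local Notation rho := (rho nu alpha beta).
Local Notation Gamma_r1 := (Gamma_r1 nu alpha beta r1).
Local Notation K2 := (K2 nu nu' alpha beta r1).
Local Notation Gamma_pm theta k :=
  (Gamma_plus nu nu' theta k || Gamma_minus nu nu' theta k).

Lemma Gamma_pmE theta k : Gamma_pm theta k = (dotz theta (zeta k) != 0).
Proof. by rewrite /Gamma_plus /Gamma_minus neq_lt orbC. Qed.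

Lemma r1_rho_le_alpha k i : zeta k i != 0 -> r1 + rho k <= alpha i.
Proof.
move=> zki; have [m [mE rho_le_m]] := maxo_ub (P := fun k => zeta k i != 0) rho zki.
have finite_i : maxo (fun k => zeta k i != 0) rho != None by rewrite mE.
have [r [rE r_le]] := mino_lb (P := [pred i | maxo (fun k => zeta k i != 0) rho != None])
  (fun i => alpha i - odflt 0 (maxo (fun k => zeta k i != 0) rho)) finite_i.
move: r1E r_le; rewrite /r1opt rE => -[->]; rewrite /= mE lerBrDr.
exact: le_trans (lerD (lexx r1) rho_le_m).
Qed.

Lemma r1_rho_lt_alpha k i : zeta k i != 0 -> ~~ Gamma_r1 i k -> r1 + rho k < alpha i.
Proof. by move=> zki nG; rewrite lt_neqAle nG r1_rho_le_alpha. Qed.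

Lemma K2_support_off_Gamma theta k : K2 theta -> dotz theta (zeta k) != 0 ->
  exists j, [/\ theta j != 0, zeta k j != 0 & ~~ Gamma_r1 j k].
Proof.
move=> [_ K2orth] nz.
case: (boolP [exists i, Gamma_r1 i k]) => [/existsP[i Gik] | noG].
  have: dotz theta (fun j => zeta k j - Pi1 nu alpha beta r1 (zeta k) j) != 0.
    by rewrite dotzB K2orth ?subr0 //; exists i.
  case/dotz_neq0=> j []; rewrite /Pi1; case: ifP => [_|S1j]; first by rewrite subrr eqxx.
  rewrite subr0 => thetaj zkj; exists j; split=> //.
  by apply: contraFN S1j => Gjk; apply/existsP; exists k.
have [j [thetaj zkj]] := dotz_neq0 nz; exists j; split=> //.
by apply: contraNN noG => Gjk; apply/existsP; exists j.
Qed.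

Lemma K2_alpha_theta_gt theta k : K2 theta -> dotz theta (zeta k) != 0 ->
  exists a, alpha_theta alpha theta = Some a /\ r1 + rho k < a.
Proof.
move=> K2theta nz; have [j [thetaj zkj nG]] := K2_support_off_Gamma K2theta nz.
have thetaj_gt0 : 0 < theta j by rewrite lt_def thetaj K2theta.1.
have [a [aE alpha_le_a]] := maxo_ub (P := fun j => 0 < theta j) alpha thetaj_gt0.
by exists a; split=> //; apply: lt_le_trans alpha_le_a; apply: r1_rho_lt_alpha.
Qed.

Lemma alpha_theta_gt_Gamma_r1 theta i l : K2 theta -> Gamma_r1 i l ->
  dotz theta (zeta l) != 0 -> exists a, alpha_theta alpha theta = Some a /\ alpha i < a.
Proof.
by move=> K2theta /eqP <-; apply: K2_alpha_theta_gt.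
Qed.

Lemma gamma_theta_gt_r1 theta : K2 theta -> (exists k, Gamma_pm theta k) ->
  exists g, gamma_theta nu nu' alpha beta theta = Some g /\ r1 < g.
Proof.
move=> K2theta [k0 Gk0]; have [m [mE _]] := maxo_ub (P := fun k => Gamma_pm theta k) rho Gk0.
have [k [Gk rhokE]] := maxo_attained mE; rewrite -rhokE {rhokE} in mE.
rewrite Gamma_pmE in Gk.
have [a [aE lt_a]] := K2_alpha_theta_gt K2theta Gk.
by exists (a - rho k); rewrite /gamma_theta aE mE ltrBrDr.
Qed.

Lemma gamma_theta_values theta g : gamma_theta nu nu' alpha beta theta = Some g ->
  exists jk : 'I_s0 * 'I_r0, g = alpha jk.1 - rho jk.2.
Proof.
rewrite /gamma_theta; case aE: (alpha_theta _ _) => [a|] //.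
case mE: (maxo _ _) => [m|] // [<-].
have [j [_ <-]] := maxo_attained aE; have [k [_ <-]] := maxo_attained mE.
by exists (j, k).
Qed.

End Lemma4p4.
Theorem lemma4p4 (R : realFieldType) (s0 r0 : nat)
  (nu nu' : 'I_r0 -> 'I_s0 -> nat) (alpha : 'I_s0 -> R) (beta : 'I_r0 -> R)
  (r1 : R)
  (Hs0 : (1 <= s0)%N) (Hr0 : (1 <= r0)%N)
  (Halpha : forall i, 0 <= alpha i)
  (Hr1 : r1opt nu nu' alpha beta = Some r1) :
  (forall (theta : 'I_s0 -> R) (i : 'I_s0) (l : 'I_r0),
     K2 nu nu' alpha beta r1 theta ->
     Gamma_r1 nu alpha beta r1 i l ->
     dotz theta (zeta nu nu' l) != 0 ->
     exists a, alpha_theta alpha theta = Some a /\ alpha i < a) /\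
  (forall theta : 'I_s0 -> R,
     K2 nu nu' alpha beta r1 theta ->
     (exists k, Gamma_plus nu nu' theta k || Gamma_minus nu nu' theta k) ->
     exists g, gamma_theta nu nu' alpha beta theta = Some g /\ r1 < g) /\
  ((exists theta : 'I_s0 -> R, K2 nu nu' alpha beta r1 theta /\
      exists k, Gamma_plus nu nu' theta k || Gamma_minus nu nu' theta k) ->
   exists r2 : R,
     (exists theta : 'I_s0 -> R, K2 nu nu' alpha beta r1 theta /\
        (exists k, Gamma_plus nu nu' theta k || Gamma_minus nu nu' theta k) /\
        gamma_theta nu nu' alpha beta theta = Some r2) /\
     (forall theta : 'I_s0 -> R, K2 nu nu' alpha beta r1 theta ->
        (exists k, Gamma_plus nu nu' theta k || Gamma_minus nu nu' theta k) ->
        forall g, gamma_theta nu nu' alpha beta theta = Some g -> r2 <= g) /\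
     r1 < r2).
Proof.
have gamma_gt := gamma_theta_gt_r1 Hr1.
split; first exact: alpha_theta_gt_Gamma_r1 Hr1.
split=> // -[theta0 [K2theta0 Gtheta0]].
pose attained (jk : 'I_s0 * 'I_r0) := exists theta, K2 nu nu' alpha beta r1 theta /\
  (exists k, Gamma_plus nu nu' theta k || Gamma_minus nu nu' theta k) /\
  gamma_theta nu nu' alpha beta theta = Some (alpha jk.1 - rho nu alpha beta jk.2).
have attained_ex : exists jk, attained jk.
  have [g [gE _]] := gamma_gt theta0 K2theta0 Gtheta0.
  have [jk gjk] := gamma_theta_values gE.
  by exists jk, theta0; rewrite -gjk.
have [jk [[theta [K2theta [Gtheta gammaE]]] jk_min]] :=
  ex_minimizer (fun jk => alpha jk.1 - rho nu alpha beta jk.2) attained_ex.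
exists (alpha jk.1 - rho nu alpha beta jk.2); split; first by exists theta.
split.
  move=> theta' K2theta' Gtheta' g gE; have [jk' gjk'] := gamma_theta_values gE.
  by rewrite gjk'; apply: jk_min; exists theta'; rewrite -gjk'.
by have [g [+ r1_lt_g]] := gamma_gt theta K2theta Gtheta; rewrite gammaE => -[->].
Qed.
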